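(* Let $P$ be an irreducible transition matrix on the finite set $S$, reversible with respect to $\pi$, with eigenvalues $\lambda_1=1$ and $\lambda_2,\dots,\lambda_n\le0$. Then $P$ efficiency-dominates $\Pi$, the transition matrix given by $\Pi(x,y)=\pi(y)$ for all $x,y\in S$ (i.i.d. sampling from $\pi$).
   Context: $S$ is a finite set with $|S|=n$, and $\pi$ is a probability distribution on $S$ with $\pi(x)>0$ for all $x$. A transition matrix $P$ is reversible with respect to $\pi$ if $\pi(x)P(x,y)=\pi(y)P(y,x)$ for all $x,y$ (its eigenvalues are then real); irreducible if every state can be reached from every other with positive probability in some number of steps. For a Markov chain $X_1,X_2,\dots$ with transition matrix $P$ and $X_1\sim\pi$, $v(f,P)=\lim_{N\to\infty}\frac1N\mathrm{Var}\big(\sum_{i=1}^N f(X_i)\big)$. $P$ efficiency-dominates $Q$ if $v(f,P)\le v(f,Q)$ for all $f:S\to\mathbb R$. *)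

From HB Require Import structures.
From mathcomp Require Import all_boot all_order all_algebra.
From mathcomp Require Import all_classical all_reals all_analysis.

Set Implicit Arguments.
Unset Strict Implicit.
Unset Printing Implicit Defensive.

Import Order.TTheory GRing.Theory Num.Theory numFieldNormedType.Exports.
Local Open Scope classical_set_scope.
Local Open Scope ring_scope.

Section MarkovDefs.
Variable R : realType.
Variable n : nat.

Definition prob_dist (pi : 'I_n -> R) : Prop :=
  (forall x, 0 < pi x) /\ \sum_x pi x = 1.

Definition stochastic (P : 'M[R]_n) : Prop :=
  (forall x y, 0 <= P x y) /\ (forall x, \sum_y P x y = 1).

Definition reversible (pi : 'I_n -> R) (P : 'M[R]_n) : Prop :=
  forall x y, pi x * P x y = pi y * P y x.

Definition irreducible (P : 'M[R]_n) : Prop :=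
  forall x y, exists k : nat, 0 < (P ^+ k) x y.

Definition iid_matrix (pi : 'I_n -> R) : 'M[R]_n := \matrix_(x, y) pi y.

Definition eigen_spectrum (P : 'M[R]_n) (lam : 'I_n -> R) : Prop :=
  char_poly P = \prod_(i < n) ('X - (lam i)%:P).

(* Law of the trajectory (X_1,...,X_N) of the chain with X_1 ~ pi. *)
Fixpoint chain_weight (P : 'M[R]_n) (x : 'I_n) (s : seq 'I_n) : R :=
  match s with
  | [::] => 1
  | y :: s' => P x y * chain_weight P y s'
  end.

Definition path_prob (pi : 'I_n -> R) (P : 'M[R]_n) (s : seq 'I_n) : R :=
  match s with
  | [::] => 1
  | x :: s' => pi x * chain_weight P x s'
  end.

Definition expect (pi : 'I_n -> R) (P : 'M[R]_n) (N : nat)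
    (g : seq 'I_n -> R) : R :=
  \sum_(t : N.-tuple 'I_n) path_prob pi P t * g t.

Definition partial_sum (f : 'I_n -> R) (s : seq 'I_n) : R :=
  \sum_(x <- s) f x.

Definition var_sum (pi : 'I_n -> R) (P : 'M[R]_n) (f : 'I_n -> R) (N : nat) : R :=
  expect pi P N (fun s => partial_sum f s ^+ 2)
  - (expect pi P N (partial_sum f)) ^+ 2.

Definition has_asymp_var (pi : 'I_n -> R) (P : 'M[R]_n) (f : 'I_n -> R) (v : R)
  : Prop :=
  (fun N : nat => var_sum pi P f N / N%:R) @ \oo --> v.

Definition eff_dominates (pi : 'I_n -> R) (P Q : 'M[R]_n) : Prop :=
  forall f : 'I_n -> R, exists vP vQ : R,
    [/\ has_asymp_var pi P f vP, has_asymp_var pi Q f vQ & vP <= vQ].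

End MarkovDefs.

From mathcomp Require Import all_boot all_order all_algebra.
From mathcomp Require Import all_classical all_reals all_analysis.
From mathcomp Require Import complex.
From mathcomp Require Import ring lra.
Import Order.TTheory GRing.Theory Num.Theory numFieldNormedType.Exports.
Local Open Scope classical_set_scope.
Local Open Scope ring_scope.

Set Implicit Arguments.
Unset Strict Implicit.
Unset Printing Implicit Defensive.

(* Centering f and conjugating P by diag (sqrt pi) turns the lag-k
   autocovariances of f(X_i) into quadratic forms <u, S^k u> of a real
   symmetric matrix S with the same spectrum as P.  The spectral theorem
   writes them as sum_j w_j e_j^k with w_j >= 0, and the weight on the
   eigenvalue 1 vanishes, because 1 is simple and u is orthogonal to its
   eigenvector sqrt pi.  Hence Var(f(X_1) + ... + f(X_N)) / N tends to
   sum_j w_j (1 + e_j) / (1 - e_j), which is at most sum_j w_j = Var_pi(f)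
   = v(f, Pi) because all the remaining e_j lie in [-1, 0]. *)

Lemma big_tuple0 (V : nmodType) (X : finType) (F : 0.-tuple X -> V) :
  \sum_t F t = F [tuple].
Proof. by rewrite (big_pred1 [tuple]) // => t; apply/esym/eqP; exact: tuple0. Qed.

Lemma big_tuple_cons (V : nmodType) (X : finType) N (F : N.+1.-tuple X -> V) :
  \sum_t F t = \sum_x \sum_(t : N.-tuple X) F [tuple of x :: t].
Proof.
rewrite pair_big /= (reindex (fun p : X * N.-tuple X => [tuple of p.1 :: p.2])) /=.
  by apply: eq_bigr => -[x t].
exists (fun t : N.+1.-tuple X => (thead t, [tuple of behead t])).
  by move=> [x t] _ /=; rewrite theadE; congr pair; exact: val_inj.
by move=> t _ /=; rewrite -tuple_eta.
Qed.

Lemma char_poly_conj (F : comNzRingType) n (A V W : 'M[F]_n) :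
  V *m W = 1%:M -> char_poly (V *m A *m W) = char_poly A.
Proof.
move=> VW; rewrite /char_poly.
have -> : char_poly_mx (V *m A *m W) =
    map_mx polyC V *m char_poly_mx A *m map_mx polyC W.
  rewrite /char_poly_mx !map_mxM mulmxBr mulmxBl; congr (_ - _).
  by rewrite scalar_mxC -mulmxA -map_mxM VW map_mx1 mulmx1.
by rewrite !det_mulmx mulrAC -det_mulmx -map_mxM VW map_mx1 det1 mul1r.
Qed.

Lemma reversible_stationary (R : realType) n (pi : 'I_n -> R) (P : 'M[R]_n) :
  (forall x, \sum_y P x y = 1) -> reversible pi P ->
  forall y, \sum_x pi x * P x y = pi y.
Proof.
move=> P_row_sum1 P_rev y; under eq_bigr do rewrite P_rev.
by rewrite -mulr_sumr P_row_sum1 mulr1.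
Qed.

Lemma card_root_prod_XsubC (F : fieldType) m (e lam : 'I_m -> F) a :
  \prod_j ('X - (e j)%:P) = \prod_i ('X - (lam i)%:P) ->
  #|[pred j | e j == a]| = #|[pred i | lam i == a]|.
Proof.
move=> /(congr1 (mup a)); pose XsubC (x : F) := 'X - x%:P.
rewrite -(big_map e xpredT XsubC) -(big_map lam xpredT XsubC).
by rewrite !mu_prod_XsubC !count_map -!sum1_count !sum1_card.
Qed.

Lemma prod_XsubC_simple_root (F : fieldType) m (e lam : 'I_m -> F) a i1 :
  \prod_j ('X - (e j)%:P) = \prod_i ('X - (lam i)%:P) ->
  (forall i, lam i = a -> i = i1) ->
  forall j j', e j = a -> e j' = a -> j = j'.
Proof.
move=> /(card_root_prod_XsubC a) card_eq lam_a j j' ej ej'.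
have : (#|[pred j | e j == a]| <= 1)%N.
  by rewrite card_eq; apply/card_le1_eqP => i i' /eqP/lam_a -> /eqP/lam_a ->.
by move/card_le1_eqP; apply; rewrite inE; apply/eqP.
Qed.

Lemma stochastic_eigenvalue_norm_le1 (R : realType) n (P : 'M[R]_n) a :
  stochastic P -> eigenvalue P a -> `|a| <= 1.
Proof.
move=> [P_ge0 P_row_sum1] /eigenvalueP [v vP v_neq0].
pose l1 := \sum_x `|v 0 x|.
have l1_gt0 : 0 < l1.
  rewrite lt_def sumr_ge0 // andbT; apply: contra v_neq0 => /eqP /psumr_eq0P v0.
  by apply/eqP/rowP => x; rewrite mxE; apply/normr0_eq0/v0.
rewrite -(ler_pM2r l1_gt0) mul1r mulr_sumr.
apply: (@le_trans _ _ (\sum_y \sum_x `|v 0 x| * P x y)).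
  apply: ler_sum => y _; rewrite -normrM.
  have /rowP/(_ y) := vP; rewrite !mxE => <-.
  apply: le_trans (ler_norm_sum _ _ _) _; apply: ler_sum => x _.
  by rewrite normrM (ger0_norm (P_ge0 x y)).
by rewrite exchange_big /=; apply: ler_sum => x _; rewrite -mulr_sumr P_row_sum1 mulr1.
Qed.

Section EigenVariance.
Variable R : realType.

(* The variance of xi_1 + ... + xi_N for a stationary sequence with
   Cov(xi_i, xi_(i+k)) = e ^ k. *)
Definition eigen_var (N : nat) (e : R) : R :=
  \sum_(M < N) (1 + 2 * \sum_(k < M) e ^+ k.+1).

Lemma eigen_var_closed N e :
  (1 - e) ^+ 2 * eigen_var N e = N%:R * (1 - e ^+ 2) - 2 * e * (1 - e ^+ N).
Proof.
have geom M : (1 - e) * \sum_(k < M) e ^+ k.+1 = e - e ^+ M.+1.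
  elim: M => [|M IH]; first by rewrite big_ord0 mulr0 expr1 subrr.
  by rewrite big_ord_recr /= mulrDr IH !exprS; ring.
elim: N => [|N IH].
  by rewrite /eigen_var big_ord0 mulr0 expr0 subrr mulr0 mul0r subr0.
have step : (1 - e) ^+ 2 * (1 + 2 * \sum_(k < N) e ^+ k.+1) =
    (1 - e) ^+ 2 + 2 * (1 - e) * (e - e ^+ N.+1) by rewrite -geom; ring.
rewrite /eigen_var big_ord_recr /= -/(eigen_var N e) mulrDr IH step -natr1.
by rewrite !exprS; ring.
Qed.

Lemma bounded_divn_cvg0 (u : nat -> R) (C : R) :
  (forall N, `|u N| <= C) -> u N / N%:R @[N --> \oo] --> 0.
Proof.
move=> u_le; apply/cvgr0Pnorm_le => eps eps_gt0; near=> N.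
have N_gt0 : 0 < N%:R :> R by rewrite ltr0n; near: N; exact: nbhs_infty_gt.
rewrite normrM normfV normr_nat ler_pdivrMr // (le_trans (u_le N)) //.
by rewrite -ler_pdivrMl //; near: N; exact: nbhs_infty_ger.
Unshelve. all: by end_near.
Qed.

Lemma eigen_var_cvg e : -1 <= e < 1 ->
  eigen_var N e / N%:R @[N --> \oo] --> (1 + e) / (1 - e).
Proof.
move=> /andP[e_ge e_lt1].
have e_neq1 : 1 - e != 0 by rewrite subr_eq0 gt_eqF.
pose c := 2 * e / (1 - e) ^+ 2.
have closed_form : {near \oo, (fun N => (1 + e) / (1 - e) - c * ((1 - e ^+ N) / N%:R))
    =1 (fun N => eigen_var N e / N%:R)}.
  near=> N; have N_neq0 : N%:R != 0 :> R.
    by rewrite pnatr_eq0 -lt0n; near: N; exact: nbhs_infty_gt.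
  rewrite -[eigen_var N e](mulKf (expf_neq0 2 e_neq1)) eigen_var_closed /c.
  by field; rewrite N_neq0 e_neq1.
apply: cvg_trans (near_eq_cvg closed_form) _.
have bounded N : `|1 - e ^+ N| <= 2.
  apply: le_trans (ler_normB _ _) _; rewrite normr1 normrX.
  have : `|e| ^+ N <= 1 by rewrite exprn_ile1 // ler_norml e_ge ltW.
  lra.
have := cvgB (cvg_cst ((1 + e) / (1 - e)))
  (cvgM (cvg_cst c) (bounded_divn_cvg0 bounded)).
by rewrite mulr0 subr0; apply.
Unshelve. all: by end_near.
Qed.

Lemma spectral_var_cvg m (w e : 'I_m -> R) (v : nat -> R) :
  (forall j, w j != 0 -> -1 <= e j < 1) ->
  (forall N, v N = \sum_j w j * eigen_var N (e j)) ->
  v N / N%:R @[N --> \oo] --> \sum_j w j * ((1 + e j) / (1 - e j)).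
Proof.
move=> e_range vE; under eq_cvg do rewrite vE mulr_suml.
apply: cvg_big => [|j _]; first exact: add_continuous.
have [->|w_neq0] := eqVneq (w j) 0.
  by under eq_cvg do rewrite !mul0r; rewrite mul0r; exact: cvg_cst.
under eq_cvg do rewrite -mulrA.
by apply: cvgM; [exact: cvg_cst | exact/eigen_var_cvg/e_range].
Qed.

Lemma spectral_var_le m (w e : 'I_m -> R) :
  (forall j, 0 <= w j) -> (forall j, w j != 0 -> e j <= 0) ->
  \sum_j w j * ((1 + e j) / (1 - e j)) <= \sum_j w j.
Proof.
move=> w_ge0 e_le0; apply: ler_sum => j _.
have [->|/e_le0 e_le] := eqVneq (w j) 0; first by rewrite mul0r.
by rewrite ler_piMr // ler_pdivrMr ?mul1r; lra.
Qed.

End EigenVariance.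

Section ChainMoments.
Variables (R : realType) (n : nat).

Definition mxapp (A : 'M[R]_n) (v : 'I_n -> R) (x : 'I_n) : R :=
  \sum_y A x y * v y.

Definition mean (pi f : 'I_n -> R) : R := \sum_x pi x * f x.

Definition autocov (pi : 'I_n -> R) (T : 'M[R]_n) (f : 'I_n -> R) (k : nat) : R :=
  \sum_x pi x * f x * mxapp (T ^+ k) f x - mean pi f ^+ 2.

(* The expectation of g (X_2, ..., X_(N+1)) given X_1 = x. *)
Definition expect_from (T : 'M[R]_n) (N : nat) (x : 'I_n) (g : seq 'I_n -> R) : R :=
  \sum_(t : N.-tuple 'I_n) chain_weight T x t * g t.

Lemma mxappM A B v x : mxapp (A *m B) v x = mxapp A (mxapp B v) x.
Proof.
rewrite /mxapp; under eq_bigr do rewrite mxE mulr_suml.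
rewrite exchange_big /=; apply: eq_bigr => y _.
by rewrite mulr_sumr; apply: eq_bigr => z _; rewrite mulrA.
Qed.

Lemma mxapp1 v x : mxapp 1%:M v x = v x.
Proof.
rewrite /mxapp (bigD1 x) //= big1 ?addr0 => [|y yx]; first by rewrite mxE eqxx mul1r.
by rewrite mxE eq_sym (negbTE yx) mul0r.
Qed.

Lemma mxappB A v w x :
  mxapp A (fun y => v y - w y) x = mxapp A v x - mxapp A w x.
Proof. by rewrite /mxapp -sumrB; apply: eq_bigr => y _; rewrite mulrBr. Qed.

Lemma expect_from0 T x g : expect_from T 0 x g = g [::].
Proof. by rewrite /expect_from big_tuple0 mul1r. Qed.

Lemma expect_fromS T N x g :
  expect_from T N.+1 x g = \sum_y T x y * expect_from T N y (fun t => g (y :: t)).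
Proof.
rewrite /expect_from big_tuple_cons; apply: eq_bigr => y _.
by rewrite mulr_sumr; apply: eq_bigr => t _; rewrite mulrA.
Qed.

Lemma eq_expect_from T N x g h :
  g =1 h -> expect_from T N x g = expect_from T N x h.
Proof. by move=> gh; apply: eq_bigr => t _; rewrite gh. Qed.

Lemma partial_sum_cons (f : 'I_n -> R) y s :
  partial_sum f (y :: s) = f y + partial_sum f s.
Proof. exact: big_cons. Qed.

Lemma expect_fromD T N x g h :
  expect_from T N x (fun t => g t + h t) = expect_from T N x g + expect_from T N x h.
Proof. by rewrite -big_split; apply: eq_bigr => t _; rewrite mulrDr. Qed.

Lemma expect_fromZ T N x c g :
  expect_from T N x (fun t => c * g t) = c * expect_from T N x g.
Proof. by rewrite mulr_sumr; apply: eq_bigr => t _; rewrite mulrCA. Qed.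

Lemma expectS pi T N g :
  expect pi T N.+1 g = \sum_y pi y * expect_from T N y (fun t => g (y :: t)).
Proof.
rewrite /expect big_tuple_cons; apply: eq_bigr => y _.
by rewrite mulr_sumr; apply: eq_bigr => t _; rewrite mulrA.
Qed.

Variables (pi : 'I_n -> R) (T : 'M[R]_n).
Hypotheses (pi_sum1 : \sum_x pi x = 1)
  (pi_stationary : forall y, \sum_x pi x * T x y = pi y)
  (T_row_sum1 : forall x, \sum_y T x y = 1).

Lemma expect_from_cst N x c : expect_from T N x (fun=> c) = c.
Proof.
elim: N x => [|N IH] x; first by rewrite expect_from0.
by rewrite expect_fromS; under eq_bigr do rewrite IH; rewrite -mulr_suml T_row_sum1 mul1r.
Qed.

Lemma mean_mxapp_expr k v : mean pi (mxapp (T ^+ k) v) = mean pi v.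
Proof.
elim: k v => [|k IH] v; first by apply: eq_bigr => x _; rewrite expr0 mxapp1.
rewrite exprS -mulmxE /mean -[RHS]IH; under eq_bigr do rewrite mxappM.
rewrite /mxapp; under eq_bigr do rewrite mulr_sumr.
rewrite exchange_big /=; apply: eq_bigr => y _.
by rewrite -pi_stationary mulr_suml; apply: eq_bigr => x _; rewrite mulrA.
Qed.

Lemma expect_stationary N g :
  expect pi T N g = \sum_x pi x * expect_from T N x g.
Proof.
case: N => [|N].
  rewrite /expect big_tuple0 /= mul1r.
  by under eq_bigr do rewrite expect_from0; rewrite -mulr_suml pi_sum1 mul1r.
rewrite expectS; under [RHS]eq_bigr do rewrite expect_fromS mulr_sumr.
rewrite exchange_big /=; apply: eq_bigr => y _.
by rewrite -pi_stationary mulr_suml; apply: eq_bigr => x _; rewrite mulrA.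
Qed.

Lemma mxapp_expr_cst k c x : mxapp (T ^+ k) (fun=> c) x = c.
Proof.
elim: k x => [|k IH] x; first by rewrite expr0 mxapp1.
rewrite exprS -mulmxE mxappM {1}/mxapp; under eq_bigr do rewrite IH.
by rewrite -mulr_suml T_row_sum1 mul1r.
Qed.

Lemma expect_from_partial_sum N x f :
  expect_from T N x (partial_sum f) = \sum_(k < N) mxapp (T ^+ k.+1) f x.
Proof.
elim: N x => [|N IH] x; first by rewrite expect_from0 /partial_sum big_nil big_ord0.
rewrite expect_fromS big_ord_recl.
under eq_bigr => y _.
  under eq_expect_from do rewrite partial_sum_cons.
  rewrite expect_fromD expect_from_cst IH.
  over.
under [X in _ = _ + X]eq_bigr do rewrite exprS -mulmxE mxappM.
rewrite /mxapp -exchange_big -big_split /=.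
by apply: eq_bigr => y _; rewrite expr1 mulrDr mulr_sumr.
Qed.

Lemma expect_partial_sum N f :
  expect pi T N (partial_sum f) = N%:R * mean pi f.
Proof.
rewrite expect_stationary; under eq_bigr do rewrite expect_from_partial_sum mulr_sumr.
rewrite exchange_big /= (eq_bigr (fun=> mean pi f)) => [|k _].
  by rewrite sumr_const card_ord mulr_natl.
exact: mean_mxapp_expr.
Qed.

Lemma expect_partial_sum_sqrS N f :
  expect pi T N.+1 (fun s => partial_sum f s ^+ 2) =
  mean pi (fun x => f x ^+ 2)
  + 2 * \sum_(k < N) \sum_x pi x * f x * mxapp (T ^+ k.+1) f x
  + expect pi T N (fun s => partial_sum f s ^+ 2).
Proof.
have sqr_cons y t : partial_sum f (y :: t) ^+ 2 =
    f y ^+ 2 + (2 * f y * partial_sum f t + partial_sum f t ^+ 2).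
  by rewrite partial_sum_cons; ring.
rewrite expectS [in RHS]expect_stationary.
under eq_bigr => y _.
  under eq_expect_from do rewrite sqr_cons.
  rewrite expect_fromD expect_from_cst expect_fromD expect_fromZ.
  rewrite expect_from_partial_sum !mulrDr.
  over.
rewrite /= big_split big_split /= addrA; congr (_ + _ + _).
rewrite exchange_big /= mulr_sumr; apply: eq_bigr => y _.
by rewrite !mulr_sumr; apply: eq_bigr => k _; ring.
Qed.

Lemma var_sum0 f : var_sum pi T f 0 = 0.
Proof. by rewrite /var_sum /expect !big_tuple0 /= !mul1r subrr. Qed.

Lemma var_sumS N f :
  var_sum pi T f N.+1 =
  var_sum pi T f N + autocov pi T f 0 + 2 * \sum_(k < N) autocov pi T f k.+1.
Proof.
rewrite /var_sum expect_partial_sum_sqrS !expect_partial_sum /autocov.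
rewrite sumrB sumr_const card_ord.
have -> : mean pi (fun x => f x ^+ 2) = \sum_x pi x * f x * mxapp (T ^+ 0) f x.
  by apply: eq_bigr => x _; rewrite expr0 mxapp1 expr2 mulrA.
rewrite -mulr_natr -natr1; ring.
Qed.

Lemma autocov_centered f k (m := mean pi f) (g := fun x => f x - m) :
  autocov pi T f k = \sum_x pi x * g x * mxapp (T ^+ k) g x.
Proof.
rewrite /g; under [RHS]eq_bigr do rewrite mxappB mxapp_expr_cst.
rewrite (eq_bigr (fun x => pi x * f x * mxapp (T ^+ k) f x
  - m * (pi x * mxapp (T ^+ k) f x) - m * (pi x * f x) + m ^+ 2 * pi x)); last first.
  by move=> x _; ring.
have := mean_mxapp_expr k f; rewrite /mean => mean_Tk.
rewrite big_split /= !sumrB -!mulr_sumr mean_Tk pi_sum1 /autocov /m /mean; ring.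
Qed.

Lemma var_sum_spectral f m (w e : 'I_m -> R) :
  (forall k, autocov pi T f k = \sum_j w j * e j ^+ k) ->
  forall N, var_sum pi T f N = \sum_j w j * eigen_var N (e j).
Proof.
move=> autocovE; elim=> [|N IH].
  by rewrite var_sum0 big1 // => j _; rewrite /eigen_var big_ord0 mulr0.
rewrite var_sumS IH autocovE (eq_bigr _ (fun (k : 'I_N) _ => autocovE k.+1)).
rewrite exchange_big /= mulr_sumr -!big_split /=; apply: eq_bigr => j _.
rewrite /eigen_var big_ord_recr /= expr0 mulr1 !mulrDr mulr1 !mulr_sumr -addrA.
by congr (_ + (_ + _)); apply: eq_bigr => k _; ring.
Qed.

Lemma var_sum_uncorrelated f :
  (forall k, autocov pi T f k.+1 = 0) ->
  forall N, var_sum pi T f N = N%:R * autocov pi T f 0.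
Proof.
move=> autocovS0; elim=> [|N IH]; first by rewrite var_sum0 mul0r.
rewrite var_sumS IH big1 => [|k _]; last exact: autocovS0.
by rewrite mulr0 addr0 -natr1 mulrDl mul1r.
Qed.

End ChainMoments.

Section IidSampling.
Variables (R : realType) (n : nat) (pi : 'I_n -> R).
Hypothesis pi_sum1 : \sum_x pi x = 1.

Lemma iid_stationary y : \sum_x pi x * iid_matrix pi x y = pi y.
Proof. by under eq_bigr do rewrite mxE; rewrite -mulr_suml pi_sum1 mul1r. Qed.

Lemma iid_row_sum1 x : \sum_y iid_matrix pi x y = 1.
Proof. by under eq_bigr do rewrite mxE. Qed.

Lemma autocov_iidS f k : autocov pi (iid_matrix pi) f k.+1 = 0.
Proof.
have mxapp_iid x : mxapp (iid_matrix pi ^+ k.+1) f x = mean pi f.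
  rewrite exprS -mulmxE mxappM -(mean_mxapp_expr iid_stationary k).
  by apply: eq_bigr => y _; rewrite mxE.
rewrite /autocov (eq_bigr (fun x => pi x * f x * mean pi f)) => [|x _]; last first.
  by rewrite mxapp_iid.
by rewrite -mulr_suml expr2 subrr.
Qed.

Lemma iid_asymp_var f :
  has_asymp_var pi (iid_matrix pi) f (autocov pi (iid_matrix pi) f 0).
Proof.
apply: cvg_near_cst; near=> N.
have N_gt0 : (0 < N)%N by near: N; exact: nbhs_infty_gt.
rewrite (var_sum_uncorrelated pi_sum1 iid_stationary iid_row_sum1 (autocov_iidS f)).
by rewrite mulrAC divff ?mul1r // pnatr_eq0 -lt0n.
Unshelve. all: by end_near.
Qed.

End IidSampling.

Section RealSymmetricSpectral.
Local Open Scope sesquilinear_scope.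
Variables (R : realType) (n : nat) (S : 'M[R]_n).
Hypothesis S_sym : S^T = S.

Local Notation toC := (map_mx (real_complex R)).

Definition sym_eig (j : 'I_n) : R := complex.Re (spectral_diag (toC S) 0 j).

(* sym_coord u holds the coordinates of u in an orthonormal eigenbasis of S,
   which the spectral theorem provides over R[i]; sym_weight u j is the
   squared modulus of the j-th one. *)
Definition sym_coord (u : 'rV[R]_n) : 'cV[R[i]]_n := spectralmx (toC S) *m (toC u)^T.

Definition sym_weight (u : 'rV[R]_n) (j : 'I_n) : R :=
  complex.Re (sym_coord u j 0) ^+ 2 + complex.Im (sym_coord u j 0) ^+ 2.

Let U := spectralmx (toC S).
Let d := spectral_diag (toC S).

Let U_unitary : U \is unitarymx := spectral_unitarymx (toC S).

Let UUt : U *m U^t* = 1%:M.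
Proof. exact/unitarymxP. Qed.

Let UtU : U^t* *m U = 1%:M.
Proof. exact: mulmx1C UUt. Qed.

Let toC_real m p (A : 'M[R]_(m, p)) : toC A \is a realmx.
Proof. by apply/mxOverP => i j; rewrite mxE; apply/complex_realP; exists (A i j). Qed.

Let toC_S_herm : toC S \is hermsymmx.
Proof.
apply: realsym_hermsym; last exact: toC_real.
apply/is_hermitianmxP.
rewrite expr0 scale1r; apply/matrixP => i j.
by rewrite !mxE /= -{1}S_sym mxE.
Qed.

Lemma sym_eigE j : ((sym_eig j)%:C)%C = d 0 j.
Proof. exact/RRe_real/(mxOverP (hermitian_spectral_diag_real toC_S_herm)). Qed.

Let U_toC_S : U *m toC S = diag_mx d *m U.
Proof.
have /orthomx_spectralP -> := hermitian_normalmx toC_S_herm.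
by rewrite !mulmxA mulmxV ?spectral_unit // mul1mx.
Qed.

Lemma char_poly_sym : char_poly S = \prod_j ('X - (sym_eig j)%:P).
Proof.
apply: (map_poly_inj (real_complex R)).
rewrite map_char_poly map_prod_XsubC.
have /orthomx_spectralP -> := hermitian_normalmx toC_S_herm.
rewrite char_poly_conj ?mulVmx ?spectral_unit // char_poly_trig ?diag_mx_is_trig //.
by apply: eq_bigr => j _; rewrite mxE eqxx mulr1n -sym_eigE.
Qed.

Lemma sym_coord_mulmx u : sym_coord (u *m S) = diag_mx d *m sym_coord u.
Proof.
have toC_S_tr : (toC S)^T = toC S by rewrite map_trmx S_sym.
by rewrite /sym_coord map_mxM trmx_mul toC_S_tr mulmxA U_toC_S -mulmxA.
Qed.

Lemma sym_coord_expr u k j :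
  sym_coord (u *m S ^+ k) j 0 = ((sym_eig j)%:C)%C ^+ k * sym_coord u j 0.
Proof.
elim: k => [|k IH]; first by rewrite expr0 mulmx1 mul1r.
rewrite exprSr -mulmxE mulmxA sym_coord_mulmx mul_diag_mx mxE IH sym_eigE.
by rewrite exprSr mulrA [_ * d 0 j]mulrC.
Qed.

Lemma sym_coord_dot a b :
  (((a *m b^T) 0 0)%:C)%C = \sum_j sym_coord a j 0 * (sym_coord b j 0)^*.
Proof.
have -> : \sum_j sym_coord a j 0 * (sym_coord b j 0)^* =
    ((sym_coord b)^t* *m sym_coord a) 0 0.
  by rewrite mxE; apply: eq_bigr => j _; rewrite !mxE mulrC.
rewrite /sym_coord trmx_mul map_mxM trmxK realmxC // mulmxA -(mulmxA _ _ U) UtU mulmx1.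
rewrite map_trmx -map_mxM [RHS]mxE; apply: congr1.
by rewrite !mxE; apply: eq_bigr => x _; rewrite !mxE mulrC.
Qed.

Lemma sym_weightE u j :
  ((sym_weight u j)%:C)%C = sym_coord u j 0 * (sym_coord u j 0)^*.
Proof. by rewrite add_Re2_Im2 normCK. Qed.

Lemma sym_weight_ge0 u j : 0 <= sym_weight u j.
Proof. by rewrite addr_ge0 ?sqr_ge0. Qed.

Lemma sym_moment u k :
  (u *m S ^+ k *m u^T) 0 0 = \sum_j sym_weight u j * sym_eig j ^+ k.
Proof.
apply: (@complexI R); rewrite sym_coord_dot rmorph_sum; apply: eq_bigr => j _.
by rewrite sym_coord_expr -mulrA -sym_weightE rmorphM rmorphXn mulrC.
Qed.

Lemma sym_weight_simple_eig1 u (v : 'rV[R]_n) j :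
  v *m S = v -> v != 0 -> u *m v^T = 0 ->
  sym_eig j = 1 -> (forall j', j' != j -> sym_eig j' != 1) -> sym_weight u j = 0.
Proof.
move=> vS v_neq0 uv eig1 eig_simple.
have coord_v j' : j' != j -> sym_coord v j' 0 = 0.
  move=> /eig_simple eig_neq1; have := sym_coord_expr v 1 j'; rewrite !expr1 vS.
  move/eqP; rewrite -subr_eq0 -{1}[sym_coord v j' 0]mul1r -mulrBl mulf_eq0 subr_eq0.
  case/orP=> [/eqP eig_eq1|/eqP //]; move/eqP: eig_neq1; case.
  by apply: (@complexI R); rewrite -eig_eq1.
have coord_vj : sym_coord v j 0 != 0.
  apply: contra v_neq0 => /eqP vj0.
  have coord_v0 : sym_coord v = 0.
    apply/matrixP => j' k; rewrite ord1 [RHS]mxE.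
    by case: (eqVneq j' j) => [->|/coord_v].
  have : U^t* *m sym_coord v = (toC v)^T by rewrite /sym_coord mulmxA UtU mul1mx.
  by rewrite coord_v0 mulmx0 => /esym/eqP; rewrite trmx_eq0 map_mx_eq0.
have := sym_coord_dot u v; rewrite uv mxE rmorph0 (bigD1 j) //= big1 => [|j' j'_neq].
  2: by rewrite coord_v // conjC0 mulr0.
rewrite addr0 => /esym/eqP; rewrite mulf_eq0 conjC_eq0 (negbTE coord_vj) orbF => /eqP z0.
by rewrite /sym_weight z0 /= expr2 mul0r addr0.
Qed.

End RealSymmetricSpectral.

Section Symmetrization.
Variables (R : realType) (n : nat) (pi : 'I_n -> R).

Definition sqrt_row : 'rV[R]_n := \row_x Num.sqrt (pi x).

Definition sym_chain (P : 'M[R]_n) : 'M[R]_n :=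
  diag_mx sqrt_row *m P *m diag_mx (\row_x (Num.sqrt (pi x))^-1).

Definition centered_sqrt_row (f : 'I_n -> R) : 'rV[R]_n :=
  \row_x (Num.sqrt (pi x) * (f x - mean pi f)).

Lemma sym_chainE P x y :
  sym_chain P x y = Num.sqrt (pi x) * P x y / Num.sqrt (pi y).
Proof. by rewrite /sym_chain mul_mx_diag mxE mul_diag_mx !mxE. Qed.

Hypothesis pi_gt0 : forall x, 0 < pi x.

Let sqrt_pi_neq0 x : Num.sqrt (pi x) != 0.
Proof. by rewrite gt_eqF // sqrtr_gt0. Qed.

Let sqrt_pi_sqr x : Num.sqrt (pi x) * Num.sqrt (pi x) = pi x.
Proof. by rewrite -expr2 sqr_sqrtr // ltW. Qed.

Let diag_sqrtV : diag_mx sqrt_row *m diag_mx (\row_x (Num.sqrt (pi x))^-1) = 1%:M.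
Proof.
by rewrite mulmx_diag; apply/matrixP => x y; rewrite !mxE mulfV // (sqrt_pi_neq0 x).
Qed.

Lemma sym_chain_expr P k : sym_chain P ^+ k = sym_chain (P ^+ k).
Proof.
elim: k => [|k IH]; first by rewrite !expr0 /sym_chain mulmxE mulr1 -mulmxE diag_sqrtV.
rewrite exprS IH [in RHS]exprS -!mulmxE /sym_chain !mulmxA.
by rewrite -(mulmxA _ _ (diag_mx sqrt_row)) (mulmx1C diag_sqrtV) mulmx1.
Qed.

Lemma char_poly_sym_chain P : char_poly (sym_chain P) = char_poly P.
Proof. exact: char_poly_conj diag_sqrtV. Qed.

Let sym_chainE_pi Q x y :
  sym_chain Q x y = pi x * Q x y / (Num.sqrt (pi x) * Num.sqrt (pi y)).
Proof.
rewrite sym_chainE -{2}(sqrt_pi_sqr x).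
by field; rewrite !sqrt_pi_neq0.
Qed.

Variable P : 'M[R]_n.
Hypotheses (pi_sum1 : \sum_x pi x = 1) (P_row_sum1 : forall x, \sum_y P x y = 1)
  (P_rev : reversible pi P).

Lemma tr_sym_chain : (sym_chain P)^T = sym_chain P.
Proof.
by apply/matrixP => x y; rewrite mxE !sym_chainE_pi P_rev [_ * Num.sqrt (pi x)]mulrC.
Qed.

Lemma sqrt_row_sym_chain : sqrt_row *m sym_chain P = sqrt_row.
Proof.
apply/rowP => y; rewrite [LHS]mxE /sqrt_row [RHS]mxE.
under eq_bigr do rewrite sym_chainE mxE !mulrA sqrt_pi_sqr.
rewrite -mulr_suml (reversible_stationary P_row_sum1 P_rev).
by rewrite -{1}(sqrt_pi_sqr y) mulfK.
Qed.

Lemma sqrt_row_neq0 : sqrt_row != 0.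
Proof.
apply/eqP => /rowP sqrt_pi0; move/eqP: pi_sum1; apply/negP.
rewrite big1 => [|x _]; first by rewrite eq_sym oner_eq0.
by rewrite -sqrt_pi_sqr; have := sqrt_pi0 x; rewrite !mxE => ->; rewrite mul0r.
Qed.

Lemma centered_sqrt_row_orth f : centered_sqrt_row f *m sqrt_row^T = 0.
Proof.
apply/matrixP => i j; rewrite !ord1 /centered_sqrt_row /sqrt_row !mxE.
under eq_bigr do rewrite !mxE mulrAC sqrt_pi_sqr mulrBr.
by rewrite sumrB -mulr_suml pi_sum1 mul1r subrr.
Qed.

Lemma autocov_sym_chain f k (u := centered_sqrt_row f) :
  autocov pi P f k = (u *m sym_chain P ^+ k *m u^T) 0 0.
Proof.
have pi_stationary := reversible_stationary P_row_sum1 P_rev.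
rewrite (autocov_centered pi_sum1 pi_stationary P_row_sum1) sym_chain_expr [RHS]mxE.
under [RHS]eq_bigr do rewrite [_ 0 _]mxE mulr_suml.
rewrite exchange_big /=; apply: eq_bigr => x _; rewrite /mxapp mulr_sumr.
apply: eq_bigr => y _; rewrite sym_chainE_pi /u /centered_sqrt_row !mxE.
by field; rewrite !sqrt_pi_neq0.
Qed.

End Symmetrization.

Lemma spectrum_eig_range (R : realType) n (P : 'M[R]_n) (e lam : 'I_n -> R) i1 :
  stochastic P -> char_poly P = \prod_j ('X - (e j)%:P) -> eigen_spectrum P lam ->
  lam i1 = 1 -> (forall i, i != i1 -> lam i <= 0) ->
  forall j, e j != 1 -> -1 <= e j <= 0.
Proof.
move=> P_st cpP lamP lam1 lam_le0 j e_neq1.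
have root_e : root (char_poly P) (e j).
  by rewrite cpP /root horner_prod (bigD1 j) //= hornerXsubC subrr mul0r.
have : eigenvalue P (e j) by rewrite eigenvalue_root_char.
move=> /(stochastic_eigenvalue_norm_le1 P_st); rewrite ler_norml => /andP[-> _] /=.
move: root_e; rewrite lamP /root horner_prod => /prodf_eq0 [i _].
rewrite hornerXsubC subr_eq0 => /eqP e_lam; rewrite e_lam; apply: lam_le0.
by apply: contraNneq e_neq1 => i_eq; rewrite e_lam i_eq lam1.
Qed.

Lemma autocov_spectral (R : realType) n (pi : 'I_n -> R) (P : 'M[R]_n)
    (lam : 'I_n -> R) i1 f :
  prob_dist pi -> stochastic P -> reversible pi P -> eigen_spectrum P lam ->
  lam i1 = 1 -> (forall i, i != i1 -> lam i <= 0) ->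
  exists w e : 'I_n -> R, [/\ forall j, 0 <= w j,
    forall j, w j != 0 -> -1 <= e j <= 0 &
    forall k, autocov pi P f k = \sum_j w j * e j ^+ k].
Proof.
move=> [pi_gt0 pi_sum1] P_st P_rev lamP lam1 lam_le0.
have P_row_sum1 := P_st.2.
pose S := sym_chain pi P.
have S_sym : S^T = S by exact: tr_sym_chain.
have cpS : char_poly P = \prod_j ('X - (sym_eig S j)%:P).
  by rewrite -(char_poly_sym_chain pi_gt0) char_poly_sym.
have lam_eq1 i : lam i = 1 -> i = i1.
  by move=> lam_i; case: (eqVneq i i1) => // /lam_le0; rewrite lam_i ler10.
have eig1_simple := prod_XsubC_simple_root (etrans (esym cpS) lamP) lam_eq1.
exists (sym_weight S (centered_sqrt_row pi f)), (sym_eig S); split.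
- exact: sym_weight_ge0.
- move=> j w_neq0; apply: (spectrum_eig_range P_st cpS lamP lam1 lam_le0).
  apply: contra w_neq0 => /eqP eig1; apply/eqP.
  apply: (sym_weight_simple_eig1 S_sym (sqrt_row_sym_chain pi_gt0 P_row_sum1 P_rev)
    (sqrt_row_neq0 pi_gt0 pi_sum1) (centered_sqrt_row_orth pi_gt0 pi_sum1 f) eig1).
  by move=> j' j'_neq; apply: contra_neq j'_neq => /eig1_simple; apply.
- by move=> k; rewrite autocov_sym_chain // sym_moment.
Qed.

Theorem corollary1 (R : realType) (n : nat) (pi : 'I_n -> R) (P : 'M[R]_n) :
  prob_dist pi -> stochastic P -> reversible pi P -> irreducible P ->
  (exists lam : 'I_n -> R, eigen_spectrum P lam /\
     exists i1 : 'I_n, lam i1 = 1 /\ (forall i, i != i1 -> lam i <= 0)) ->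
  eff_dominates pi P (iid_matrix pi).
Proof.
move=> pi_prob P_st P_rev _ [lam [lamP [i1 [lam1 lam_le0]]]] f.
have [_ pi_sum1] := pi_prob; have [_ P_row_sum1] := P_st.
have pi_stationary := reversible_stationary P_row_sum1 P_rev.
have [w [e [w_ge0 e_range autocovE]]] :=
  autocov_spectral f pi_prob P_st P_rev lamP lam1 lam_le0.
exists (\sum_j w j * ((1 + e j) / (1 - e j))), (autocov pi (iid_matrix pi) f 0).
split.
- apply: spectral_var_cvg => [j /e_range /andP[e_ge e_le0]|].
    by rewrite e_ge (le_lt_trans e_le0 ltr01).
  exact: (var_sum_spectral pi_sum1 pi_stationary P_row_sum1 autocovE).
- exact: iid_asymp_var.
- have -> : autocov pi (iid_matrix pi) f 0 = \sum_j w j.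
    transitivity (autocov pi P f 0); first by [].
    by rewrite autocovE; apply: eq_bigr => j _; rewrite expr0 mulr1.
  by apply: spectral_var_le => // j /e_range /andP[_ ->].
Qed.
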